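(* For every integer $k>4$, \[\overline{\alpha}(\{1,4,k\})=\begin{cases}\frac{2k}{5k+5} & k\equiv 0\pmod 5,\\ \frac25 & k\equiv 1\pmod 5,\\ \frac{2k+1}{5k+5} & k\equiv 2\pmod 5,\\ \frac{2k-1}{5k+5} & k\equiv 3\pmod 5,\\ \frac25 & k\equiv 4\pmod 5.\end{cases}\]
   Context: For a finite set $S$ of positive integers, the distance graph $G(S)$ has vertex set $\mathbb{Z}$, with $i,j$ adjacent iff $|i-j|\in S$. The density of $A\subseteq\mathbb{Z}$ is $\delta(A)=\limsup_{N\to\infty}\frac{|A\cap[-N,N]|}{2N+1}$, and the independence ratio $\overline{\alpha}(S)$ is the supremum of $\delta(A)$ over independent sets $A$ of $G(S)$. *)

From Stdlib Require Import Reals Lra ZArith Classical ClassicalEpsilon.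
From Coquelicot Require Import Coquelicot.
Open Scope R_scope.

Definition S14k (k : Z) : Z -> Prop := fun d => d = 1%Z \/ d = 4%Z \/ d = k.

Definition independent (S : Z -> Prop) (A : Z -> Prop) : Prop :=
  forall i j : Z, A i -> A j -> ~ S (Z.abs (i - j)).

Definition ind (A : Z -> Prop) (z : Z) : R :=
  if excluded_middle_informative (A z) then 1 else 0.

Definition count_in (A : Z -> Prop) (N : nat) : R :=
  sum_f_R0 (fun m => ind A (Z.of_nat m - Z.of_nat N)%Z) (2 * N).

Definition density (A : Z -> Prop) : Rbar :=
  LimSup_seq (fun N => count_in A N / (2 * INR N + 1)).

Definition indep_ratio (S : Z -> Prop) : Rbar :=
  Lub_Rbar (fun d => exists A, independent S A /\ density A = Finite d).

From Pilot Require Import Defs.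
From Stdlib Require Import Reals ZArith Lia Lra ClassicalEpsilon.
From Coquelicot Require Import Coquelicot.

(* Every window of five consecutive integers meets an independent set in at most two
   points, and the distance k removes one more point from a window of length k + 1.
   For k = 5M, 5M + 2 this bounds every window of length k + 1 by 2M, 2M + 1, and for
   k = 1, 4 (mod 5) the five-windows already give 2/5.  For k = 5M + 3 a window of
   length 5M + 4 can hold 2M + 2 points, but only in a rigid configuration that
   forces lighter windows nearby, so such windows hold 2M + 1 points on average.
   Averaging over all windows turns these bounds into bounds on the density, and
   explicit periodic independent sets attain them. *)

Open Scope Z_scope.

Definition indZ (A : Z -> Prop) (x : Z) : Z :=
  if excluded_middle_informative (A x) then 1 else 0.

Fixpoint zsum (f : Z -> Z) (u : Z) (T : nat) : Z :=
  match T with O => 0 | S T' => zsum f u T' + f (u + Z.of_nat T') end.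

(* [cnt A x L] is the number of elements of [A] in [[x, x + L)]; it is [0] when [L <= 0]. *)
Definition cnt (A : Z -> Prop) (x L : Z) : Z := zsum (indZ A) x (Z.to_nat L).

Lemma indZ_bounds A x : 0 <= indZ A x <= 1.
Proof. unfold indZ; destruct excluded_middle_informative; lia. Qed.

Lemma indZ_in A x : A x -> indZ A x = 1.
Proof. unfold indZ; destruct excluded_middle_informative; tauto. Qed.

Lemma indZ_eq1 A x : indZ A x = 1 -> A x.
Proof. unfold indZ; destruct excluded_middle_informative; [auto | lia]. Qed.

Lemma indZ_notin A x : ~ A x -> indZ A x = 0.
Proof. unfold indZ; destruct excluded_middle_informative; tauto. Qed.

Lemma zsum_cat f u T1 T2 :
  zsum f u (T1 + T2) = zsum f u T1 + zsum f (u + Z.of_nat T1) T2.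
Proof.
  induction T2 as [|T2 IH]; simpl.
  - rewrite Nat.add_0_r; lia.
  - rewrite Nat.add_succ_r; simpl; rewrite IH.
    replace (u + Z.of_nat (T1 + T2)) with (u + Z.of_nat T1 + Z.of_nat T2) by lia; lia.
Qed.

Lemma zsumD f g u T : zsum (fun x => f x + g x) u T = zsum f u T + zsum g u T.
Proof. induction T; simpl; lia. Qed.

Lemma zsum_shift f c u T : zsum (fun x => f (x + c)) u T = zsum f (u + c) T.
Proof.
  induction T as [|T IH]; simpl; auto.
  rewrite IH; do 2 f_equal; lia.
Qed.

Lemma zsum_le f g u T : (forall x, f x <= g x) -> zsum f u T <= zsum g u T.
Proof. intros Hfg; induction T; simpl; [lia|]. specialize (Hfg (u + Z.of_nat T)); lia. Qed.

Lemma zsum_le_const f c u T : (forall x, f x <= c) -> zsum f u T <= c * Z.of_nat T.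
Proof. intros Hf; induction T; simpl; [lia|]. specialize (Hf (u + Z.of_nat T)); lia. Qed.

Lemma zsum_ge_const f c u T : (forall x, c <= f x) -> c * Z.of_nat T <= zsum f u T.
Proof. intros Hf; induction T; simpl; [lia|]. specialize (Hf (u + Z.of_nat T)); lia. Qed.

Section ZeroOneSums.

Variable g : Z -> Z.
Hypothesis g01 : forall x, 0 <= g x <= 1.

Lemma zsum01_bounds u T : 0 <= zsum g u T <= Z.of_nat T.
Proof. induction T; simpl; [lia|]. pose proof (g01 (u + Z.of_nat T)); lia. Qed.

Lemma zsum01_shift u d T : Z.abs (zsum g (u + Z.of_nat d) T - zsum g u T) <= Z.of_nat d.
Proof.
  pose proof (zsum_cat g u d T) as Edt.
  pose proof (zsum_cat g u T d) as Etd.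
  rewrite Nat.add_comm in Etd.
  pose proof (zsum01_bounds u d); pose proof (zsum01_bounds (u + Z.of_nat T) d); lia.
Qed.

End ZeroOneSums.

(* Summed over [x], the [g]-terms telescope up to six boundary values. *)
Lemma zsum_discharge (f g : Z -> Z) K :
  (forall x, 0 <= g x <= 1) ->
  (forall x, f x + g (x + 4) + g (x - 3) <= K + g x + g (x + 1)) ->
  forall u T, zsum f u T <= K * Z.of_nat T + 6.
Proof.
  intros g01 Hfg u T.
  pose proof (zsum_le _ _ u T Hfg) as Hsum.
  rewrite !zsumD in Hsum.
  rewrite (zsum_shift g 4), (zsum_shift g 1), (zsum_shift g (-3)) in Hsum.
  pose proof (zsum_le_const (fun _ => K) K u T (fun _ => Z.le_refl K)).
  pose proof (zsum01_shift g g01 (u + 1) 3 T).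
  pose proof (zsum01_shift g g01 (u - 3) 3 T).
  replace (u + 1 + Z.of_nat 3) with (u + 4) in * by lia.
  replace (u - 3 + Z.of_nat 3) with u in * by lia.
  replace (u + -3) with (u - 3) in Hsum by lia.
  lia.
Qed.

Lemma zsum_windows_swap f u T L :
  zsum (fun x => zsum f x L) u T = zsum (fun i => zsum f i T) u L.
Proof.
  induction L as [|L IH]; simpl.
  - induction T; simpl; lia.
  - rewrite zsumD, IH, (zsum_shift f (Z.of_nat L)); reflexivity.
Qed.

Lemma zsum_near_const f c e u L :
  (forall t, 0 <= t < Z.of_nat L -> Z.abs (f (u + t) - c) <= e) ->
  Z.abs (zsum f u L - Z.of_nat L * c) <= Z.of_nat L * e.
Proof.
  induction L as [|L IH]; intros Hf; cbn [zsum]; [lia|].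
  specialize (IH (fun t Ht => Hf t ltac:(lia))).
  specialize (Hf (Z.of_nat L) ltac:(lia)); rewrite Nat2Z.inj_succ; lia.
Qed.

(* Double counting: the windows of length [n] starting in [[u, u + T)] cover
   each point of [[u, u + T)] about [n] times. *)
Lemma window_average A n u T : 0 <= n ->
  Z.abs (zsum (fun x => cnt A x n) u T - n * cnt A u (Z.of_nat T)) <= n * n.
Proof.
  intros Hn; unfold cnt; rewrite Nat2Z.id, zsum_windows_swap.
  rewrite <- (Z2Nat.id n) at 2 3 4 by lia.
  apply zsum_near_const; intros t Ht.
  rewrite <- (Z2Nat.id t) by lia.
  pose proof (zsum01_shift _ (indZ_bounds A) u (Z.to_nat t) T); lia.
Qed.

Lemma cnt_cat A x L L1 L2 y : 0 <= L1 -> 0 <= L2 -> L = L1 + L2 -> y = x + L1 ->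
  cnt A x L = cnt A x L1 + cnt A y L2.
Proof.
  intros H1 H2 -> ->; unfold cnt.
  rewrite Z2Nat.inj_add, zsum_cat, Z2Nat.id by lia; reflexivity.
Qed.

Ltac split_cnt A x L L1 L2 :=
  pose proof (cnt_cat A x L L1 L2 (x + L1) ltac:(lia) ltac:(lia) ltac:(lia) eq_refl).

Lemma cnt1 A x : cnt A x 1 = indZ A x.
Proof. unfold cnt; simpl; rewrite Z.add_0_r; reflexivity. Qed.

Lemma cnt2 A x x1 : x1 = x + 1 -> cnt A x 2 = indZ A x + indZ A x1.
Proof. intros ->; unfold cnt; simpl; rewrite Z.add_0_r; reflexivity. Qed.

Lemma cnt3 A x x1 x2 : x1 = x + 1 -> x2 = x + 2 ->
  cnt A x 3 = indZ A x + indZ A x1 + indZ A x2.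
Proof. intros -> ->; unfold cnt; simpl; rewrite Z.add_0_r; reflexivity. Qed.

Lemma cnt4 A x x1 x2 x3 : x1 = x + 1 -> x2 = x + 2 -> x3 = x + 3 ->
  cnt A x 4 = indZ A x + indZ A x1 + indZ A x2 + indZ A x3.
Proof. intros -> -> ->; unfold cnt; simpl; rewrite Z.add_0_r; reflexivity. Qed.

Lemma cnt5 A x x1 x2 x3 x4 : x1 = x + 1 -> x2 = x + 2 -> x3 = x + 3 -> x4 = x + 4 ->
  cnt A x 5 = indZ A x + indZ A x1 + indZ A x2 + indZ A x3 + indZ A x4.
Proof. intros -> -> -> ->; unfold cnt; simpl; rewrite Z.add_0_r; reflexivity. Qed.

Lemma indZ_indep_le S A x y : independent S A -> S (Z.abs (x - y)) ->
  indZ A x + indZ A y <= 1.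
Proof.
  intros HI HS; unfold indZ.
  destruct (excluded_middle_informative (A x)) as [Hx|Hx];
  destruct (excluded_middle_informative (A y)) as [Hy|Hy]; try lia.
  destruct (HI x y Hx Hy HS).
Qed.

Section IndependentSets.

Variables (k : Z) (A : Z -> Prop).
Hypothesis HI : independent (S14k k) A.

Lemma indZ_dist1 x y : y = x + 1 -> indZ A x + indZ A y <= 1.
Proof. intros ->; apply (indZ_indep_le _ _ _ _ HI); left; lia. Qed.

Lemma indZ_dist4 x y : y = x + 4 -> indZ A x + indZ A y <= 1.
Proof. intros ->; apply (indZ_indep_le _ _ _ _ HI); right; left; lia. Qed.

Lemma indZ_distk x y : 0 <= k -> y = x + k -> indZ A x + indZ A y <= 1.
Proof. intros Hk ->; apply (indZ_indep_le _ _ _ _ HI); right; right; lia. Qed.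

Lemma cnt2_le x : cnt A x 2 <= 1.
Proof. rewrite (cnt2 A x (x + 1)) by lia; apply indZ_dist1; lia. Qed.

Lemma cnt4_le x : cnt A x 4 <= 2.
Proof.
  rewrite (cnt4 A x (x + 1) (x + 2) (x + 3)) by lia.
  pose proof (indZ_dist1 x (x + 1) eq_refl); pose proof (indZ_dist1 (x + 2) (x + 3) ltac:(lia)).
  lia.
Qed.

(* In [x, ..., x + 4] the distance-1 pairs form a path and [x, x + 4] closes it
   to a 5-cycle, whose independent sets have at most two points. *)
Lemma cnt5_le x : cnt A x 5 <= 2.
Proof.
  rewrite (cnt5 A x (x + 1) (x + 2) (x + 3) (x + 4)) by lia.
  pose proof (indZ_dist1 x (x + 1) eq_refl); pose proof (indZ_dist1 (x + 1) (x + 2) ltac:(lia)).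
  pose proof (indZ_dist1 (x + 2) (x + 3) ltac:(lia)).
  pose proof (indZ_dist1 (x + 3) (x + 4) ltac:(lia)).
  pose proof (indZ_dist4 x (x + 4) eq_refl).
  pose proof (indZ_bounds A x); pose proof (indZ_bounds A (x + 2)); lia.
Qed.

Lemma cnt_mul5_le j x : 0 <= j -> cnt A x (5 * j) <= 2 * j.
Proof.
  intros Hj; revert x; pattern j; apply natlike_ind; [| |exact Hj].
  - intros x; reflexivity.
  - intros i Hi IH x; rewrite (cnt_cat A x _ (5 * i) 5 (x + 5 * i)) by lia.
    pose proof (IH x); pose proof (cnt5_le (x + 5 * i)); lia.
Qed.

End IndependentSets.

Lemma window_5M_le M A x : 1 <= M -> independent (S14k (5 * M)) A ->
  cnt A x (5 * M + 1) <= 2 * M.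
Proof.
  intros HM HI.
  split_cnt A x (5 * M + 1) (5 * M) 1; split_cnt A x (5 * M + 1) 1 (5 * M).
  rewrite !cnt1 in *.
  pose proof (cnt_mul5_le _ _ HI M x ltac:(lia)).
  pose proof (cnt_mul5_le _ _ HI M (x + 1) ltac:(lia)).
  pose proof (indZ_distk _ _ HI x (x + 5 * M) ltac:(lia) eq_refl); lia.
Qed.

Lemma window_5M2_le M A x : 1 <= M -> independent (S14k (5 * M + 2)) A ->
  cnt A x (5 * M + 3) <= 2 * M + 1.
Proof.
  intros HM HI.
  split_cnt A x (5 * M + 3) (5 * M) 3; split_cnt A x (5 * M + 3) 3 (5 * M).
  rewrite (cnt3 A x (x + 1) (x + 2)), (cnt3 A (x + 5 * M) (x + 5 * M + 1) (x + 5 * M + 2))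
    in * by lia.
  pose proof (cnt_mul5_le _ _ HI M x ltac:(lia)).
  pose proof (cnt_mul5_le _ _ HI M (x + 3) ltac:(lia)).
  pose proof (indZ_distk _ _ HI x (x + 5 * M + 2) ltac:(lia) ltac:(lia)).
  pose proof (indZ_dist1 _ _ HI x (x + 1) eq_refl).
  pose proof (indZ_dist1 _ _ HI (x + 1) (x + 2) ltac:(lia)).
  pose proof (indZ_dist1 _ _ HI (x + 5 * M) (x + 5 * M + 1) eq_refl).
  pose proof (indZ_dist1 _ _ HI (x + 5 * M + 1) (x + 5 * M + 2) ltac:(lia)).
  pose proof (indZ_bounds A (x + 1)); pose proof (indZ_bounds A (x + 5 * M + 1)); lia.
Qed.

Section Residue3.

Variables (M : Z) (A : Z -> Prop).
Hypotheses (HM : 1 <= M) (HI : independent (S14k (5 * M + 3)) A).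

Lemma window_5M3_le x : cnt A x (5 * M + 4) <= 2 * M + 2.
Proof.
  split_cnt A x (5 * M + 4) (5 * M) 4.
  pose proof (cnt_mul5_le _ _ HI M x ltac:(lia)); pose proof (cnt4_le _ _ HI (x + 5 * M)); lia.
Qed.

(* A window of length [5M + 4] exceeding the average [2M + 1] of the extremal
   sets is rigid; [tight y] marks such a window whose first point lies in [A]. *)
Definition tight (y : Z) : Prop := cnt A y (5 * M + 4) = 2 * M + 2 /\ A y.

Ltac bound x := pose proof (indZ_bounds A x).

Lemma tight_inside y : tight y ->
  indZ A (y + 1) = 0 /\ indZ A (y + 2) = 1 /\
  indZ A (y + 5 * M) = 1 /\ indZ A (y + 5 * M + 1) = 0 /\
  indZ A (y + 5 * M + 2) = 1 /\ indZ A (y + 5 * M + 3) = 0.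
Proof.
  intros [Hc Hy%indZ_in].
  pose proof (cnt_mul5_le _ _ HI M (y + 2) ltac:(lia)).
  pose proof (cnt_mul5_le _ _ HI M (y + 3) ltac:(lia)).
  pose proof (cnt_mul5_le _ _ HI M y ltac:(lia)).
  pose proof (indZ_dist1 _ _ HI y (y + 1) eq_refl).
  pose proof (indZ_dist1 _ _ HI (y + 5 * M + 1) (y + 5 * M + 2) ltac:(lia)).
  pose proof (indZ_distk _ _ HI y (y + 5 * M + 3) ltac:(lia) ltac:(lia)).
  split_cnt A y (5 * M + 4) 3 (5 * M + 1); split_cnt A (y + 3) (5 * M + 1) (5 * M) 1.
  split_cnt A y (5 * M + 4) 2 (5 * M + 2); split_cnt A (y + 2) (5 * M + 2) (5 * M) 2.
  split_cnt A y (5 * M + 4) (5 * M) 4.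
  replace (y + 3 + 5 * M) with (y + 5 * M + 3) in * by lia.
  replace (y + 2 + 5 * M) with (y + 5 * M + 2) in * by lia.
  rewrite cnt1, (cnt2 A y (y + 1)), (cnt3 A y (y + 1) (y + 2)),
    (cnt2 A (y + 5 * M + 2) (y + 5 * M + 3)),
    (cnt4 A (y + 5 * M) (y + 5 * M + 1) (y + 5 * M + 2) (y + 5 * M + 3)) in * by lia.
  bound (y + 1); bound (y + 2); bound (y + 5 * M); bound (y + 5 * M + 1);
    bound (y + 5 * M + 2); bound (y + 5 * M + 3).
  lia.
Qed.

Lemma tight_mem_add5 y : tight y -> indZ A (y + 5) = 1.
Proof.
  intros Hy; pose proof (tight_inside y Hy) as Hin; destruct Hy as [Hc _].
  split_cnt A y (5 * M + 4) 5 (5 * M - 1); split_cnt A (y + 5) (5 * M - 1) 4 (5 * (M - 1)).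
  replace (y + 5 + 4) with (y + 9) in * by lia.
  rewrite (cnt4 A (y + 5) (y + 6) (y + 7) (y + 8)) in * by lia.
  pose proof (cnt5_le _ _ HI y).
  pose proof (cnt_mul5_le _ _ HI (M - 1) (y + 9) ltac:(lia)).
  pose proof (indZ_dist4 _ _ HI (y + 2) (y + 6) ltac:(lia)).
  pose proof (indZ_dist1 _ _ HI (y + 7) (y + 8) ltac:(lia)).
  bound (y + 5); bound (y + 6); lia.
Qed.

Lemma tight_outside y : tight y ->
  indZ A (y - 4) = 0 /\ indZ A (y - 3) = 0 /\ indZ A (y - 2) = 0 /\ indZ A (y - 1) = 0 /\
  indZ A (y + 5 * M + 4) = 0 /\ indZ A (y + 5 * M + 5) = 0 /\ indZ A (y + 5 * M + 6) = 0.
Proof.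
  intros Hy; pose proof (tight_inside y Hy) as Hin; destruct Hy as [_ Hy%indZ_in].
  pose proof (indZ_dist4 _ _ HI (y - 4) y ltac:(lia)).
  pose proof (indZ_distk _ _ HI (y - 3) (y + 5 * M) ltac:(lia) ltac:(lia)).
  pose proof (indZ_dist4 _ _ HI (y - 2) (y + 2) ltac:(lia)).
  pose proof (indZ_dist1 _ _ HI (y - 1) y ltac:(lia)).
  pose proof (indZ_dist4 _ _ HI (y + 5 * M) (y + 5 * M + 4) ltac:(lia)).
  pose proof (indZ_distk _ _ HI (y + 2) (y + 5 * M + 5) ltac:(lia) ltac:(lia)).
  pose proof (indZ_dist4 _ _ HI (y + 5 * M + 2) (y + 5 * M + 6) ltac:(lia)).
  bound (y - 4); bound (y - 3); bound (y - 2); bound (y - 1);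
    bound (y + 5 * M + 4); bound (y + 5 * M + 5); bound (y + 5 * M + 6).
  lia.
Qed.

Lemma tight_cnt_add3 y : tight y -> cnt A (y + 3) (5 * M + 4) = 2 * M.
Proof.
  intros Hy; pose proof (tight_inside y Hy); pose proof (tight_outside y Hy).
  destruct Hy as [Hc Hy%indZ_in].
  split_cnt A y (5 * M + 7) 3 (5 * M + 4); split_cnt A y (5 * M + 7) (5 * M + 4) 3.
  rewrite (cnt3 A y (y + 1) (y + 2)),
    (cnt3 A (y + (5 * M + 4)) (y + 5 * M + 5) (y + 5 * M + 6)) in * by lia.
  replace (y + (5 * M + 4)) with (y + 5 * M + 4) in * by lia; lia.
Qed.

Lemma tight_cnt_sub4 y : tight y -> cnt A (y - 4) (5 * M + 4) = 2 * M.
Proof.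
  intros Hy; pose proof (tight_inside y Hy); pose proof (tight_outside y Hy).
  destruct Hy as [Hc _].
  split_cnt A (y - 4) (5 * M + 8) 4 (5 * M + 4); split_cnt A (y - 4) (5 * M + 8) (5 * M + 4) 4.
  replace (y - 4 + 4) with y in * by lia.
  replace (y - 4 + (5 * M + 4)) with (y + 5 * M) in * by lia.
  rewrite (cnt4 A (y - 4) (y - 3) (y - 2) (y - 1)),
    (cnt4 A (y + 5 * M) (y + 5 * M + 1) (y + 5 * M + 2) (y + 5 * M + 3)) in * by lia.
  lia.
Qed.

Lemma tight_gap7 y : tight y -> ~ tight (y + 7).
Proof.
  intros Hy Hy7.
  pose proof (tight_mem_add5 y Hy); pose proof (tight_outside (y + 7) Hy7).
  replace (y + 7 - 2) with (y + 5) in * by lia; lia.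
Qed.

Lemma heavy_window_tight x : 2 * M + 2 <= cnt A x (5 * M + 4) -> tight x \/ tight (x + 1).
Proof.
  intros Hc; pose proof (window_5M3_le x); pose proof (window_5M3_le (x + 1)).
  split_cnt A x (5 * M + 4) 2 (5 * M + 2); split_cnt A (x + 2) (5 * M + 2) (5 * M) 2.
  split_cnt A x (5 * M + 5) 1 (5 * M + 4); split_cnt A x (5 * M + 5) (5 * M + 4) 1.
  rewrite !cnt1, (cnt2 A x (x + 1)) in * by lia.
  pose proof (cnt_mul5_le _ _ HI M (x + 2) ltac:(lia)).
  pose proof (cnt2_le _ _ HI (x + 2 + 5 * M)).
  bound x; bound (x + 1); bound (x + (5 * M + 4)).
  destruct (Z.eq_dec (indZ A x) 1) as [Hx|Hx]; [left | right];
    (split; [lia | apply indZ_eq1; lia]).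
Qed.

(* A tight window at [y] pays for the excess of the windows at [y - 1] and [y],
   since it makes the windows at [y - 4] and [y + 3] light. *)
Lemma window_5M3_discharge x :
  cnt A x (5 * M + 4) + indZ tight (x + 4) + indZ tight (x - 3) <=
  2 * M + 1 + indZ tight x + indZ tight (x + 1).
Proof.
  pose proof (indZ_bounds tight x); pose proof (indZ_bounds tight (x + 1)).
  destruct (excluded_middle_informative (tight (x + 4))) as [H4|H4].
  - pose proof (tight_cnt_sub4 _ H4); replace (x + 4 - 4) with x in * by lia.
    assert (H3 : ~ tight (x - 3)).
    { intros H3; apply (tight_gap7 _ H3); replace (x - 3 + 7) with (x + 4) by lia; exact H4. }
    rewrite (indZ_in _ _ H4), (indZ_notin _ _ H3); lia.
  - rewrite (indZ_notin _ _ H4).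
    destruct (excluded_middle_informative (tight (x - 3))) as [H3|H3].
    + pose proof (tight_cnt_add3 _ H3); replace (x - 3 + 3) with x in * by lia.
      rewrite (indZ_in _ _ H3); lia.
    + rewrite (indZ_notin _ _ H3).
      destruct (Z_le_gt_dec (cnt A x (5 * M + 4)) (2 * M + 1)); [lia|].
      pose proof (window_5M3_le x).
      destruct (heavy_window_tight x ltac:(lia)) as [Ht|Ht]; rewrite (indZ_in _ _ Ht); lia.
Qed.

End Residue3.

Definition periodize (n : Z) (B : Z -> Prop) : Z -> Prop := fun x => B (x mod n).

Lemma periodize_indep n S B : 0 < n ->
  (forall r r' d, 0 <= r < n -> 0 <= r' < n -> B r -> B r' -> S d -> (r + d) mod n <> r') ->
  independent S (periodize n B).
Proof.
  intros Hn HB i j Hi Hj HS; unfold periodize in *.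
  pose proof (Z.mod_pos_bound i n Hn); pose proof (Z.mod_pos_bound j n Hn).
  destruct (Z_le_gt_dec i j).
  - apply (HB (i mod n) (j mod n) (Z.abs (i - j))); auto.
    rewrite Z.add_mod_idemp_l by lia; f_equal; lia.
  - apply (HB (j mod n) (i mod n) (Z.abs (i - j))); auto.
    rewrite Z.add_mod_idemp_l by lia; f_equal; lia.
Qed.

Lemma add_mod_ne n r r' d : 0 <= r < n -> 0 <= r' < n -> 0 <= d < n ->
  r' - r <> d -> r' - r <> d - n -> (r + d) mod n <> r'.
Proof.
  intros Hr Hr' Hd H1 H2.
  destruct (Z_lt_ge_dec (r + d) n).
  - rewrite Z.mod_small; lia.
  - rewrite <- (Z.mod_add _ (-1)), Z.mod_small; lia.
Qed.

Lemma cnt_ext A A' x L : (forall t, x <= t < x + L -> (A t <-> A' t)) -> cnt A x L = cnt A' x L.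
Proof.
  intros HAA'; unfold cnt.
  assert (Hind : forall t, 0 <= t < Z.of_nat (Z.to_nat L) -> indZ A (x + t) = indZ A' (x + t)).
  { intros t Ht; specialize (HAA' (x + t) ltac:(lia)); unfold indZ.
    destruct excluded_middle_informative, excluded_middle_informative; tauto. }
  revert Hind; induction (Z.to_nat L) as [|T IH]; intros Hind; cbn [zsum]; [reflexivity|].
  rewrite IH, Hind; [reflexivity | lia | intros t Ht; apply Hind; lia].
Qed.

Lemma cnt_periodize n B L : 0 <= L <= n -> cnt (periodize n B) 0 L = cnt B 0 L.
Proof.
  intros HL; apply cnt_ext; intros t Ht; unfold periodize; rewrite Z.mod_small by lia; tauto.
Qed.

Lemma cnt_periodize_shift1 n B x : 0 < n -> cnt (periodize n B) (x + 1) n = cnt (periodize n B) x n.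
Proof.
  intros Hn; split_cnt (periodize n B) x (n + 1) 1 n; split_cnt (periodize n B) x (n + 1) n 1.
  rewrite !cnt1 in *.
  replace (indZ (periodize n B) (x + n)) with (indZ (periodize n B) x) in * by
    (unfold indZ, periodize; cbv beta;
     rewrite <- Z.add_mod_idemp_r, Z.mod_same, Z.add_0_r by lia; reflexivity).
  lia.
Qed.

Lemma cnt_periodize_period n B x : 0 < n -> cnt (periodize n B) x n = cnt B 0 n.
Proof.
  intros Hn; rewrite <- (cnt_periodize n B n) by lia.
  induction x as [|x IH|x IH] using Z.peano_ind; auto.
  - rewrite <- Z.add_1_r, cnt_periodize_shift1; auto.
  - rewrite <- IH, <- (cnt_periodize_shift1 n B (Z.pred x)) by lia; f_equal; lia.
Qed.

Definition pattern (J : Z) (E : Z -> Prop) (r : Z) : Prop :=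
  (0 <= r < 5 * J /\ (r mod 5 = 0 \/ r mod 5 = 2)) \/ E r.

Lemma cnt_pattern J E j : (forall r, E r -> 5 * J <= r) -> 0 <= j <= J ->
  cnt (pattern J E) 0 (5 * j) = 2 * j.
Proof.
  intros HE Hj; destruct Hj as [Hj0 HjJ]; revert HjJ; pattern j; apply natlike_ind; [| |exact Hj0].
  - reflexivity.
  - intros i Hi IH HiJ.
    rewrite (cnt_cat _ 0 _ (5 * i) 5 (0 + 5 * i)), IH by lia.
    rewrite (cnt5 _ (0 + 5 * i) (5 * i + 1) (5 * i + 2) (5 * i + 3) (5 * i + 4)) by lia.
    rewrite (indZ_in _ (0 + 5 * i)), (indZ_notin _ (5 * i + 1)), (indZ_in _ (5 * i + 2)),
      (indZ_notin _ (5 * i + 3)), (indZ_notin _ (5 * i + 4)); try lia.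
    all: unfold pattern; try (intros [[? ?] | ?%HE]); Z.to_euclidean_division_equations; lia.
Qed.

Lemma cnt_pattern_tail J E L : 0 <= J -> 5 * J <= L -> (forall r, E r -> 5 * J <= r) ->
  cnt (pattern J E) 0 L = 2 * J + cnt E (5 * J) (L - 5 * J).
Proof.
  intros HJ HL HE.
  rewrite (cnt_cat _ 0 L (5 * J) (L - 5 * J) (5 * J)), (cnt_pattern J E J HE) by lia.
  f_equal; apply cnt_ext; intros t Ht; unfold pattern.
  split; [intros [[? ?] | ?]; [lia | assumption] | now right].
Qed.

Definition extremal_5M (M : Z) : Z -> Prop :=
  periodize (5 * M + 1) (pattern (M - 1) (fun r => r = 5 * M - 5 \/ r = 5 * M - 2)).

Definition extremal_5M2 (M : Z) : Z -> Prop :=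
  periodize (5 * M + 3) (pattern M (fun r => r = 5 * M)).

Definition extremal_5M3 (M : Z) : Z -> Prop :=
  periodize (5 * M + 4)
    (pattern (M - 1) (fun r => r = 5 * M - 5 \/ r = 5 * M - 2 \/ r = 5 * M + 1)).

Definition extremal_5 : Z -> Prop := periodize 5 (pattern 1 (fun _ => False)).

(* [lia] cannot reason about [mod n] for a symbolic period [n]; [add_mod_ne] reduces
   the check to linear disequalities. *)
Ltac check_pattern_indep :=
  apply periodize_indep; [lia|];
  intros r r' d Hr Hr' HB HB' HS; unfold S14k in HS; apply add_mod_ne; try lia;
  unfold pattern in *; Z.to_euclidean_division_equations; lia.

Lemma extremal_5M_indep M : 1 <= M -> independent (S14k (5 * M)) (extremal_5M M).
Proof. intros HM; check_pattern_indep. Qed.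

Lemma extremal_5M2_indep M : 1 <= M -> independent (S14k (5 * M + 2)) (extremal_5M2 M).
Proof. intros HM; check_pattern_indep. Qed.

Lemma extremal_5M3_indep M : 1 <= M -> independent (S14k (5 * M + 3)) (extremal_5M3 M).
Proof. intros HM; check_pattern_indep. Qed.

Lemma extremal_5_indep k : 4 < k -> k mod 5 = 1 \/ k mod 5 = 4 ->
  independent (S14k k) extremal_5.
Proof.
  intros Hk Hkmod; apply periodize_indep; [lia|].
  intros r r' d Hr Hr'; unfold pattern, S14k; Z.to_euclidean_division_equations; lia.
Qed.

Ltac count_points :=
  unfold cnt;
  match goal with |- context [Z.to_nat ?L] =>
    let n := eval compute in (Z.to_nat L) in change (Z.to_nat L) with n end;
  cbn [zsum];
  repeat match goal with
  | |- context [indZ ?E ?t] =>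
      first [ rewrite (indZ_in E t) by (cbv beta; lia)
            | rewrite (indZ_notin E t) by (cbv beta; lia) ]
  end;
  lia.

Lemma extremal_5M_cnt M x : 1 <= M -> cnt (extremal_5M M) x (5 * M + 1) = 2 * M.
Proof.
  intros HM; unfold extremal_5M; rewrite cnt_periodize_period, cnt_pattern_tail
    by (intros; cbv beta in *; lia).
  replace (5 * M + 1 - 5 * (M - 1)) with 6 by lia; count_points.
Qed.

Lemma extremal_5M2_cnt M x : 1 <= M -> cnt (extremal_5M2 M) x (5 * M + 3) = 2 * M + 1.
Proof.
  intros HM; unfold extremal_5M2; rewrite cnt_periodize_period, cnt_pattern_tail
    by (intros; cbv beta in *; lia).
  replace (5 * M + 3 - 5 * M) with 3 by lia; count_points.
Qed.

Lemma extremal_5M3_cnt M x : 1 <= M -> cnt (extremal_5M3 M) x (5 * M + 4) = 2 * M + 1.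
Proof.
  intros HM; unfold extremal_5M3; rewrite cnt_periodize_period, cnt_pattern_tail
    by (intros; cbv beta in *; lia).
  replace (5 * M + 4 - 5 * (M - 1)) with 9 by lia; count_points.
Qed.

Lemma extremal_5_cnt x : cnt extremal_5 x 5 = 2.
Proof.
  unfold extremal_5; rewrite cnt_periodize_period, cnt_pattern_tail
    by (intros; cbv beta in *; lia).
  count_points.
Qed.

Close Scope Z_scope.
Open Scope R_scope.

Lemma ind_indZ (A : Z -> Prop) (z : Z) : Defs.ind A z = IZR (indZ A z).
Proof. unfold Defs.ind, indZ; destruct excluded_middle_informative; reflexivity. Qed.

Lemma count_in_cnt (A : Z -> Prop) (N : nat) :
  count_in A N = IZR (cnt A (- Z.of_nat N) (Z.of_nat (2 * N + 1))).
Proof.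
  unfold count_in, cnt; rewrite Nat2Z.id, Nat.add_1_r.
  induction (2 * N)%nat as [|L IH].
  - simpl; rewrite ind_indZ, Z.add_0_r; reflexivity.
  - rewrite tech5, IH; cbn [zsum]; rewrite !plus_IZR, ind_indZ.
    replace (Z.of_nat (S L) - Z.of_nat N)%Z with (- Z.of_nat N + Z.of_nat (S L))%Z by lia; ring.
Qed.

Lemma is_lim_seq_add_div_odd (l b : R) : is_lim_seq (fun N => l + b / (2 * INR N + 1)) l.
Proof.
  assert (Hinv : is_lim_seq (fun N => / (2 * INR N + 1)) 0).
  { apply (is_lim_seq_inv _ p_infty); [|discriminate].
    eapply is_lim_seq_le_p_loc; [|apply is_lim_seq_INR].
    exists O; intros N _; pose proof (pos_INR N); lra. }
  pose proof (is_lim_seq_plus' _ _ l (b * 0) (is_lim_seq_const l)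
                (is_lim_seq_mult' _ _ b 0 (is_lim_seq_const b) Hinv)) as Hlim.
  rewrite Rmult_0_r, Rplus_0_r in Hlim; exact Hlim.
Qed.

Lemma count_ratio_dev (A : Z -> Prop) (n num : Z) (N : nat) : (0 < n)%Z ->
  count_in A N / (2 * INR N + 1) - IZR num / IZR n =
  IZR (n * cnt A (- Z.of_nat N) (Z.of_nat (2 * N + 1)) - num * Z.of_nat (2 * N + 1))
    / IZR n / (2 * INR N + 1).
Proof.
  intros Hn; pose proof (pos_INR N); pose proof (IZR_lt _ _ Hn).
  rewrite count_in_cnt, minus_IZR, !mult_IZR, <- INR_IZR_INZ, plus_INR, mult_INR.
  simpl (INR 2); simpl (INR 1); field; lra.
Qed.

Lemma IZR_div_le_compat (x y n : Z) (m : R) : (0 < n)%Z -> 0 < m -> (x <= y)%Z ->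
  IZR x / IZR n / m <= IZR y / IZR n / m.
Proof.
  intros Hn Hm Hxy; unfold Rdiv.
  apply Rmult_le_compat_r; [left; apply Rinv_0_lt_compat; exact Hm|].
  apply Rmult_le_compat_r; [left; apply Rinv_0_lt_compat, IZR_lt; exact Hn|].
  apply IZR_le; exact Hxy.
Qed.

Lemma limsup_of_lim (u : nat -> R) (l : R) : is_lim_seq u l -> LimSup_seq u = l.
Proof. intros Hu; apply is_LimSup_seq_unique, is_lim_LimSup_seq, Hu. Qed.

Lemma density_le (A : Z -> Prop) (n num C : Z) : (0 < n)%Z ->
  (forall u T, n * cnt A u (Z.of_nat T) - num * Z.of_nat T <= C)%Z ->
  Rbar_le (density A) (IZR num / IZR n).
Proof.
  intros Hn HA; unfold density.
  rewrite <- (limsup_of_lim _ _ (is_lim_seq_add_div_odd (IZR num / IZR n) (IZR C / IZR n))).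
  apply LimSup_le; exists O; intros N _.
  pose proof (count_ratio_dev A n num N Hn); pose proof (pos_INR N).
  pose proof (IZR_div_le_compat _ _ n (2 * INR N + 1) Hn ltac:(lra)
                (HA (- Z.of_nat N)%Z (2 * N + 1)%nat)).
  lra.
Qed.

Lemma density_eq (A : Z -> Prop) (n num C : Z) : (0 < n)%Z ->
  (forall u T, Z.abs (n * cnt A u (Z.of_nat T) - num * Z.of_nat T) <= C)%Z ->
  density A = IZR num / IZR n.
Proof.
  intros Hn HA; unfold density; apply limsup_of_lim.
  apply (is_lim_seq_le_le (fun N => IZR num / IZR n + IZR (- C) / IZR n / (2 * INR N + 1)) _
           (fun N => IZR num / IZR n + IZR C / IZR n / (2 * INR N + 1)));
    [intros N | apply is_lim_seq_add_div_odd | apply is_lim_seq_add_div_odd].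
  pose proof (count_ratio_dev A n num N Hn); pose proof (pos_INR N).
  specialize (HA (- Z.of_nat N)%Z (2 * N + 1)%nat).
  set (dev := (n * cnt A _ _ - num * _)%Z) in *.
  pose proof (IZR_div_le_compat (- C) dev n (2 * INR N + 1) Hn ltac:(lra) ltac:(lia)).
  pose proof (IZR_div_le_compat dev C n (2 * INR N + 1) Hn ltac:(lra) ltac:(lia)).
  lra.
Qed.

Lemma indep_ratio_of_windows (S : Z -> Prop) (n num C : Z) (A0 : Z -> Prop) : (0 < n)%Z ->
  (forall A, independent S A ->
     forall u T, (zsum (fun x => cnt A x n) u T <= num * Z.of_nat T + C)%Z) ->
  independent S A0 -> (forall x, num <= cnt A0 x n)%Z ->
  indep_ratio S = Finite (IZR num / IZR n).
Proof.
  intros Hn Hwin HA0 Hcnt0; unfold indep_ratio; apply is_lub_Rbar_unique; split.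
  - intros d [A [HA Hd]]; rewrite <- Hd.
    apply (density_le A n num (C + n * n) Hn); intros u T.
    pose proof (window_average A n u T ltac:(lia)); pose proof (Hwin A HA u T); lia.
  - intros b Hb; apply Hb; exists A0; split; [exact HA0|].
    apply (density_eq A0 n num (Z.abs C + n * n) Hn); intros u T.
    pose proof (window_average A0 n u T ltac:(lia)); pose proof (Hwin A0 HA0 u T).
    pose proof (zsum_ge_const _ _ u T Hcnt0); lia.
Qed.

Lemma indep_ratio_5M (M : Z) : (1 <= M)%Z ->
  indep_ratio (S14k (5 * M)) = Finite (IZR (2 * M) / IZR (5 * M + 1)).
Proof.
  intros HM; apply (indep_ratio_of_windows _ _ _ 0 (extremal_5M M)).
  - lia.
  - intros A HA u T.
    pose proof (zsum_le_const _ (2 * M) u T (fun x => window_5M_le M A x HM HA)); lia.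
  - apply extremal_5M_indep; lia.
  - intros x; rewrite extremal_5M_cnt; lia.
Qed.

Lemma indep_ratio_5M2 (M : Z) : (1 <= M)%Z ->
  indep_ratio (S14k (5 * M + 2)) = Finite (IZR (2 * M + 1) / IZR (5 * M + 3)).
Proof.
  intros HM; apply (indep_ratio_of_windows _ _ _ 0 (extremal_5M2 M)).
  - lia.
  - intros A HA u T.
    pose proof (zsum_le_const _ (2 * M + 1) u T (fun x => window_5M2_le M A x HM HA)); lia.
  - apply extremal_5M2_indep; lia.
  - intros x; rewrite extremal_5M2_cnt; lia.
Qed.

Lemma indep_ratio_5M3 (M : Z) : (1 <= M)%Z ->
  indep_ratio (S14k (5 * M + 3)) = Finite (IZR (2 * M + 1) / IZR (5 * M + 4)).
Proof.
  intros HM; apply (indep_ratio_of_windows _ _ _ 6 (extremal_5M3 M)).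
  - lia.
  - intros A HA; apply (zsum_discharge _ (indZ (tight M A))); [apply indZ_bounds|].
    exact (window_5M3_discharge M A HM HA).
  - apply extremal_5M3_indep; lia.
  - intros x; rewrite extremal_5M3_cnt; lia.
Qed.

Lemma indep_ratio_5 (k : Z) : (4 < k)%Z -> (k mod 5 = 1 \/ k mod 5 = 4)%Z ->
  indep_ratio (S14k k) = Finite (IZR 2 / IZR 5).
Proof.
  intros Hk Hkmod; apply (indep_ratio_of_windows _ _ _ 0 extremal_5).
  - lia.
  - intros A HA u T; pose proof (zsum_le_const _ 2 u T (cnt5_le k A HA)); lia.
  - apply extremal_5_indep; assumption.
  - intros x; rewrite extremal_5_cnt; lia.
Qed.

Theorem theorem32 (k : Z) : (4 < k)%Z ->
  indep_ratio (S14k k) =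
  Finite (let kr := IZR k in
          match Z.modulo k 5 with
          | 0%Z => 2 * kr / (5 * kr + 5)
          | 1%Z => 2 / 5
          | 2%Z => (2 * kr + 1) / (5 * kr + 5)
          | 3%Z => (2 * kr - 1) / (5 * kr + 5)
          | _ => 2 / 5
          end).
Proof.
  intros Hk; cbv zeta.
  pose proof (Z.div_mod k 5 ltac:(lia)) as Hdiv; pose proof (Z.mod_pos_bound k 5 ltac:(lia)).
  set (M := (k / 5)%Z) in Hdiv.
  assert (HM : (1 <= M)%Z) by lia.
  assert (HMpos : 0 < IZR M) by (apply IZR_lt; lia).
  assert (Hr : (k mod 5 = 0 \/ k mod 5 = 1 \/ k mod 5 = 2 \/ k mod 5 = 3 \/ k mod 5 = 4)%Z) by lia.
  destruct Hr as [Hr | [Hr | [Hr | [Hr | Hr]]]]; rewrite Hr in *.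
  - replace k with (5 * M)%Z by lia; rewrite indep_ratio_5M by exact HM.
    f_equal; rewrite !plus_IZR, !mult_IZR; field; lra.
  - rewrite indep_ratio_5 by lia; reflexivity.
  - replace k with (5 * M + 2)%Z by lia; rewrite indep_ratio_5M2 by exact HM.
    f_equal; rewrite !plus_IZR, !mult_IZR; field; lra.
  - replace k with (5 * M + 3)%Z by lia; rewrite indep_ratio_5M3 by exact HM.
    f_equal; rewrite !plus_IZR, !mult_IZR; field; lra.
  - rewrite indep_ratio_5 by lia; reflexivity.
Qed.
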